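(* Fix $\eta>0$ and $K\ge1$. Let $\hat\lambda$ be the output of the randomized message passing procedure run for $K$ iterations with the EMP update and block distribution uniform over $\{(e,i):e\in E,i\in e\}$. Then $$\mathbb{E}\sum_{e\in E,i\in e}\|S^{\hat\lambda}_{e,i}-\mu^{\hat\lambda}_i\|_1^2\le\frac{8m\eta\,(L(0)-\inf_\lambda L(\lambda))}{K}.$$
   Context: Let $G=(V,E)$ be a finite undirected graph with $n=|V|$, $m=|E|$, every vertex incident to at least one edge; $N_i=\{e\in E:i\in e\}$. $\chi$ is a finite label set with $d=|\chi|\ge2$. Costs $C_i\in\mathbb{R}^\chi$, $C_e\in\mathbb{R}^{\chi^2}$; for $e=\{i,j\}$, $x_e=(x_i,x_j)$, $(x_e)_i=x_i$. Dual variables $\lambda=(\lambda_{e,i}(x))\in\mathbb{R}^{2md}$ and $$L(\lambda)=\frac1\eta\sum_{i\in V}\log\sum_{x\in\chi}\exp\Big(-\eta C_i(x)+\eta\sum_{e\in N_i}\lambda_{e,i}(x)\Big)+\frac1\eta\sum_{e\in E}\log\sum_{x_e\in\chi^2}\exp\Big(-\eta C_e(x_e)-\eta\sum_{i\in e}\lambda_{e,i}((x_e)_i)\Big).$$ $\mu^\lambda_i$, $\mu^\lambda_e$ are the normalized distributions proportional to the exponentials inside the two sums; $S^\lambda_{e,i}(x)=\sum_{x_e:(x_e)_i=x}\mu^\lambda_e(x_e)$; slack $\nu^\lambda_{e,i}=S^\lambda_{e,i}-\mu^\lambda_i$. EMP update at block $(e,i)$: replace $\lambda_{e,i}(x)$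 by $\lambda_{e,i}(x)+\frac{1}{2\eta}\log(S^\lambda_{e,i}(x)/\mu^\lambda_i(x))$, other coordinates unchanged. Randomized message passing procedure: $\lambda^{(0)}=0$; for $k=0,\dots,K-1$, sample a block $b_k$ independently from the given distribution and let $\lambda^{(k+1)}$ be $\lambda^{(k)}$ with block $b_k$ updated by the update rule evaluated at $\lambda^{(k)}$; output $\hat\lambda\in\arg\min_{\lambda\in\{\lambda^{(0)},\dots,\lambda^{(K)}\}}\sum_{e\in E,i\in e}\|\nu^\lambda_{e,i}\|_1^2$. *)

From HB Require Import structures.
From mathcomp Require Import all_boot all_order all_algebra.
From mathcomp Require Import all_classical all_reals.
From mathcomp Require Import topology normedtype sequences exp.

Set Implicit Arguments.
Unset Strict Implicit.
Unset Printing Implicit Defensive.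
Import Order.TTheory GRing.Theory Num.Theory.
Local Open Scope ring_scope.

(* Graph encoding: vertices V : finType, edges E : finType, each edge e has
   two endpoints [endp e false] and [endp e true] (an arbitrary but fixed
   orientation used only to identify chi^2 with label pairs (x_i, x_j)).
   A block (e,i) with i in e is encoded as (e, b) with i = endp e b. *)

Section EMP.
Variables (R : realType) (V E X : finType).
Variable endp : E -> bool -> V.
Variable CV : V -> X -> R.
Variable CE : E -> X * X -> R.
Variable eta : R.

Local Notation block := (E * bool)%type.
Definition dual := block -> X -> R.

Definition bvert (b : block) : V := endp b.1 b.2.

Definition proj (b : bool) (xe : X * X) : X := if b then xe.2 else xe.1.

Definition vexp (l : dual) (i : V) (x : X) : R :=
  - eta * CV i x + eta * \sum_(b : block | bvert b == i) l b x.

Definition eexp (l : dual) (e : E) (xe : X * X) : R :=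
  - eta * CE e xe - eta * \sum_(c : bool) l (e, c) (proj c xe).

Definition Ldual (l : dual) : R :=
  eta^-1 * \sum_(i : V) ln (\sum_(x : X) expR (vexp l i x))
  + eta^-1 * \sum_(e : E) ln (\sum_(xe : X * X) expR (eexp l e xe)).

Definition muV (l : dual) (i : V) (x : X) : R :=
  expR (vexp l i x) / \sum_(y : X) expR (vexp l i y).

Definition muE (l : dual) (e : E) (xe : X * X) : R :=
  expR (eexp l e xe) / \sum_(ye : X * X) expR (eexp l e ye).

Definition Smarg (l : dual) (b : block) (x : X) : R :=
  \sum_(xe : X * X | proj b.2 xe == x) muE l b.1 xe.

Definition slack (l : dual) (b : block) (x : X) : R :=
  Smarg l b x - muV l (bvert b) x.

Definition slack_obj (l : dual) : R :=
  \sum_(b : block) (\sum_(x : X) `|slack l b x|) ^+ 2.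

Definition emp_update (l : dual) (b : block) : dual :=
  fun c x => if c == b then
               l b x + (2 * eta)^-1 * ln (Smarg l b x / muV l (bvert b) x)
             else l c x.

Definition dual0 : dual := fun _ _ => 0.

Definition iterate (bs : seq block) (k : nat) : dual :=
  foldl emp_update dual0 (take k bs).

End EMP.

(* The EMP update of block (e,i) adds [1/(2 eta) ln (S / mu_i)] to lambda_{e,i}.
   Writing [u = sqrt (S / mu_i)], it multiplies the partition function of
   vertex i and of edge e by the Bhattacharyya coefficient [B = sum mu_i u],
   so the dual objective changes by exactly [2/eta ln B].  Since [mu_i] and
   [S = mu_i u^2] are both distributions, Cauchy-Schwarz gives
   [||S - mu_i||_1^2 <= 4 (1 - B^2) <= - 8 ln B], i.e. the squared slack of a
   block is at most [4 eta] times the decrease of L caused by updating it.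
   Averaging over a uniformly random block and telescoping over K steps bounds
   the summed expected slack of the first K iterates by
   [4 eta * 2|E| * (L(0) - E L(lambda^(K)))]; the selected iterate is no worse
   than their average, and L is bounded below (by Jensen, the lambda-terms of
   its mean-potential lower bound cancel), so E L(lambda^(K)) >= inf L. *)

From Pilot Require Import Defs.
From HB Require Import structures.
From mathcomp Require Import all_boot all_order all_algebra.
From mathcomp Require Import all_classical all_reals.
From mathcomp Require Import topology normedtype sequences exp.
From mathcomp Require Import ring lra.
Import Order.TTheory GRing.Theory Num.Theory.
Local Open Scope ring_scope.

Set Implicit Arguments.
Unset Strict Implicit.
Unset Printing Implicit Defensive.

Section FiniteSums.
Variable R : realType.
Implicit Type I : finType.

Lemma sum_cst I (c : R) : \sum_(i : I) c = #|I|%:R * c.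
Proof. by rewrite sumr_const mulr_natl cardE. Qed.

(* Cauchy-Schwarz for a nonnegative weight [w], proved through Lagrange's
   identity [2 (A C - P^2) = sum_(i,j) w_i w_j (a_i b_j - a_j b_i)^2]. *)
Lemma weighted_cauchy_schwarz I (w a b : I -> R) :
  (forall i, 0 <= w i) ->
  (\sum_i w i * a i * b i) ^+ 2 <=
  (\sum_i w i * a i ^+ 2) * (\sum_i w i * b i ^+ 2).
Proof.
move=> w_ge0.
set A := \sum_i w i * a i ^+ 2; set C := \sum_i w i * b i ^+ 2.
set P := \sum_i w i * a i * b i.
have lagrange : \sum_i \sum_j w i * w j * (a i * b j - a j * b i) ^+ 2 =
                2 * (A * C - P ^+ 2).
  have -> : \sum_i \sum_j w i * w j * (a i * b j - a j * b i) ^+ 2 =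
      \sum_i \sum_j (w i * a i ^+ 2) * (w j * b j ^+ 2)
    + \sum_i \sum_j (w j * a j ^+ 2) * (w i * b i ^+ 2)
    - 2 * \sum_i \sum_j (w i * a i * b i) * (w j * a j * b j).
    rewrite mulr_sumr -!big_split -sumrB; apply: eq_bigr => i _.
    rewrite mulr_sumr -!big_split -sumrB; apply: eq_bigr => j _ /=; ring.
  rewrite [X in _ + X - _]exchange_big /= -!big_distrlr /= -/A -/C -/P; ring.
have : 0 <= \sum_i \sum_j w i * w j * (a i * b j - a j * b i) ^+ 2.
  apply: sumr_ge0 => i _; apply: sumr_ge0 => j _.
  by rewrite mulr_ge0 ?sqr_ge0 ?mulr_ge0.
by rewrite lagrange pmulr_rge0 // subr_ge0.
Qed.

Definition softmax I (a : I -> R) (i : I) : R :=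
  expR (a i) / \sum_j expR (a j).

Lemma partition_gt0 I (a : I -> R) (i0 : I) : 0 < \sum_j expR (a j).
Proof.
rewrite (bigD1 i0) //= ltr_pwDl ?expR_gt0 //.
by apply: sumr_ge0 => j _; exact/ltW/expR_gt0.
Qed.

Lemma softmax_gt0 I (a : I -> R) (i : I) : 0 < softmax a i.
Proof. by rewrite divr_gt0 ?expR_gt0 ?(partition_gt0 _ i). Qed.

Lemma softmax_sum I (a : I -> R) (i0 : I) : \sum_i softmax a i = 1.
Proof. by rewrite -mulr_suml divff // lt0r_neq0 ?(partition_gt0 _ i0). Qed.

Lemma partition_tilt I (a c : I -> R) :
  \sum_i expR (a i + c i) = (\sum_i expR (a i)) * \sum_i softmax a i * expR (c i).
Proof.
rewrite mulr_sumr; apply: eq_bigr => i _.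
rewrite expRD /softmax mulrA mulrCA divff ?mulr1 //.
by rewrite lt0r_neq0 ?(partition_gt0 _ i).
Qed.

Lemma logsumexp_ge_mean I (a : I -> R) (i0 : I) :
  ln #|I|%:R + #|I|%:R^-1 * \sum_i a i <= ln (\sum_i expR (a i)).
Proof.
have N_gt0 : 0 < (#|I|%:R : R) by rewrite ltr0n; apply/card_gt0P; exists i0.
set m := #|I|%:R^-1 * \sum_i a i.
have sum_dev : \sum_i (1 + (a i - m)) = #|I|%:R.
  rewrite big_split sumrB /= !sum_cst /m; field; exact: lt0r_neq0.
have : expR m * #|I|%:R <= \sum_i expR (a i).
  rewrite -sum_dev mulr_sumr; apply: ler_sum => i _.
  by rewrite -{2}(subrKC m (a i)) expRD ler_wpM2l ?expR_ge0 // expR_ge1Dx.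
rewrite -ler_ln ?posrE ?mulr_gt0 ?expR_gt0 ?(partition_gt0 _ i0) //.
by rewrite lnM ?posrE ?expR_gt0 // expRK addrC.
Qed.

(* If [p] and [p * u^2] are probability vectors with affinity
   [B = sum p u] (the Bhattacharyya coefficient of the two distributions),
   their squared l1 distance is at most [4 (1 - B^2) <= - 8 ln B]. *)
Lemma l1_sq_le_neg_log_affinity I (p u : I -> R) :
  (forall i, 0 <= p i) -> (forall i, 0 <= u i) ->
  \sum_i p i = 1 -> \sum_i p i * u i ^+ 2 = 1 -> 0 < \sum_i p i * u i ->
  (\sum_i `|p i * u i ^+ 2 - p i|) ^+ 2 <= - 8 * ln (\sum_i p i * u i).
Proof.
move=> p_ge0 u_ge0 p_sum pu2_sum; set B := \sum_i p i * u i => B_gt0.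
have factor i : `|p i * u i ^+ 2 - p i| = p i * `|u i - 1| * (u i + 1).
  have -> : p i * u i ^+ 2 - p i = p i * (u i - 1) * (u i + 1) by ring.
  by rewrite !normrM (ger0_norm (p_ge0 i)) [`|u i + 1|]ger0_norm // addr_ge0.
have moment (s : R) : \sum_i p i * (u i + s) ^+ 2 = 1 + 2 * s * B + s ^+ 2.
  under eq_bigr do rewrite sqrrD mulrDr mulrDr.
  rewrite !big_split /= pu2_sum -mulr_suml p_sum mul1r /B mulr_sumr.
  by congr (_ + _ + _); apply: eq_bigr => i _; ring.
have cs := weighted_cauchy_schwarz (fun i => `|u i - 1|) (fun i => u i + 1) p_ge0.
have sq_norm : \sum_i p i * `|u i - 1| ^+ 2 = \sum_i p i * (u i - 1) ^+ 2.
  by apply: eq_bigr => i _; rewrite real_normK ?num_real.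
rewrite /= sq_norm !moment in cs.
under eq_bigr do rewrite factor.
have lnB : ln B <= B - 1.
  by have := @le_ln1Dx R (B - 1); rewrite addrCA subrr addr0; apply; lra.
have B_le1 : B <= 1.
  have : 0 <= \sum_i p i * (u i - 1) ^+ 2.
    by apply: sumr_ge0 => i _; rewrite mulr_ge0 ?sqr_ge0.
  rewrite moment; nra.
apply: le_trans cs _; nra.
Qed.

Lemma sum_proj_pair I (c : bool) (g : I -> R) :
  \sum_(xe : I * I) g (Defs.proj c xe) = #|I|%:R * \sum_x g x.
Proof.
rewrite -(pair_bigA _ (fun x y => g (Defs.proj c (x, y)))) /= mulr_sumr.
case: c => /=; last by apply: eq_bigr => x _; rewrite sum_cst.
by rewrite exchange_big; apply: eq_bigr => y _; rewrite sum_cst.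
Qed.

Lemma sum_ln_at I (a : I) (B : R) :
  \sum_i ln (if a == i then B else 1) = ln B.
Proof.
rewrite (bigD1 a) //= eqxx big1 ?addr0 // => i ne_ia.
by rewrite eq_sym (negbTE ne_ia) ln1.
Qed.

Lemma sum_tuple_cons (T : finType) n (F : n.+1.-tuple T -> R) :
  \sum_t F t = \sum_x \sum_(t : n.-tuple T) F [tuple of x :: t].
Proof.
rewrite pair_bigA /= (reindex (fun p : T * n.-tuple T => [tuple of p.1 :: p.2])) //.
exists (fun t : n.+1.-tuple T => (thead t, [tuple of behead t])).
  by move=> [x t] _; congr (_, _); apply: val_inj.
by move=> t _; rewrite /= -tuple_eta.
Qed.

End FiniteSums.

Section RandomizedDescent.
Variables (R : realType) (S : Type) (T : finType).
Variables (f : S -> T -> S) (Phi g : S -> R) (c : R).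
Local Notation N := (#|T|%:R : R).
Hypothesis expected_step :
  forall s, g s <= c * (N * Phi s - \sum_t Phi (f s t)).

Lemma expected_descent K s :
  \sum_(ts : K.-tuple T) \sum_(k < K) g (foldl f s (take k ts)) <=
  c * N * (N ^+ K * Phi s - \sum_(ts : K.-tuple T) Phi (foldl f s ts)).
Proof.
elim: K s => [|K IH] s.
  rewrite big1 => [|ts _]; last by rewrite big_ord0.
  have -> : \sum_(ts : 0.-tuple T) Phi (foldl f s ts) = Phi s.
    rewrite (eq_bigr (fun=> Phi s)) => [|ts _]; last by rewrite (tuple0 ts).
    by rewrite sum_cst card_tuple expn0 mul1r.
  by rewrite expr0 mul1r subrr mulr0.
rewrite !sum_tuple_cons.
under eq_bigr do under eq_bigr do rewrite big_ord_recl /=.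
under eq_bigr do rewrite big_split /= sum_cst card_tuple natrX.
apply: le_trans (ler_sum _ (fun t _ => lerD (lexx _) (IH (f s t)))) _.
rewrite big_split /= sum_cst -mulr_sumr sumrB -mulr_sumr.
(* the first step contributes [N^(K+1) g s], paid for by [expected_step] *)
have step := ler_wpM2l (exprn_ge0 K.+1 (ler0n R #|T|)) (expected_step s).
rewrite -subr_ge0 in step; rewrite -subr_ge0.
by congr (0 <= _): step; rewrite exprS; ring.
Qed.
End RandomizedDescent.

Section EMPStep.
Variables (R : realType) (V E X : finType) (endp : E -> bool -> V).
Variables (CV : V -> X -> R) (CE : E -> X * X -> R) (eta : R).
Hypothesis eta_gt0 : 0 < eta.
Variable x0 : X.

Local Notation block := (E * bool)%type.
Local Notation L := (Ldual endp CV CE eta).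
Local Notation mu := (muV endp CV eta).
Local Notation S := (Smarg CE eta).
Local Notation update := (emp_update endp CV CE eta).
Local Notation vpot := (vexp endp CV eta).
Local Notation epot := (eexp CE eta).
Local Notation vert := (bvert endp).

Definition emp_increment (l : dual R E X) (b : block) (x : X) : R :=
  (2 * eta)^-1 * ln (S l b x / mu l (vert b) x).

Definition ratio_root (l : dual R E X) (b : block) (x : X) : R :=
  expR (eta * emp_increment l b x).

Definition affinity (l : dual R E X) (b : block) : R :=
  \sum_x mu l (vert b) x * ratio_root l b x.

Lemma emp_updateE l b c x :
  update l b c x = l c x + (if c == b then emp_increment l b x else 0).
Proof. by rewrite /emp_update; case: eqP => [->|]; rewrite ?addr0. Qed.

Lemma vpot_update l b i x :
  vpot (update l b) i x =
  vpot l i x + (if vert b == i then eta * emp_increment l b x else 0).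
Proof.
rewrite /vexp; under eq_bigr do rewrite emp_updateE.
rewrite big_split /= -big_mkcondr /= mulrDr addrA; congr (_ + _).
case: eqP => [<-|ne_bi]; last first.
  rewrite big_pred0 ?mulr0 // => c.
  by apply/andP => -[/eqP vert_c /eqP c_b]; apply: ne_bi; rewrite -vert_c c_b.
by rewrite (big_pred1 b) // => c /=; rewrite andbC; case: (c =P b) => // ->; rewrite eqxx.
Qed.

Lemma epot_update l b e xe :
  epot (update l b) e xe =
  epot l e xe + (if b.1 == e then - (eta * emp_increment l b (Defs.proj b.2 xe)) else 0).
Proof.
rewrite /eexp; under eq_bigr do rewrite emp_updateE.
rewrite big_split /= mulrDr opprD addrA; congr (_ + _).
case: b => e0 c0 /=; case: eqP => [<-|ne_e]; last first.
  rewrite big1 ?mulr0 ?oppr0 // => c _; rewrite xpair_eqE.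
  by case: eqP => // e_e0; case: ne_e.
rewrite (bigD1 c0) //= eqxx big1 ?addr0 // => c /negbTE ne_c.
by rewrite xpair_eqE eqxx ne_c.
Qed.

Lemma muV_gt0 l i x : 0 < mu l i x.
Proof. exact: softmax_gt0. Qed.

Lemma Smarg_gt0 l b x : 0 < S l b x.
Proof.
rewrite /Smarg (bigD1 (x, x)) /=; last by case: b.2.
rewrite ltr_pwDl ?softmax_gt0 //.
by apply: sumr_ge0 => ye _; exact/ltW/softmax_gt0.
Qed.

Lemma Smarg_sum l b : \sum_x S l b x = 1.
Proof.
by rewrite -(softmax_sum (epot l b.1) (x0, x0)) (partition_big (Defs.proj b.2) xpredT).
Qed.

Lemma ratio_root_sq l b x : mu l (vert b) x * ratio_root l b x ^+ 2 = S l b x.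
Proof.
rewrite /ratio_root -expRM_natr /emp_increment.
set t := ln _; have -> : eta * ((2 * eta)^-1 * t) * 2 = t.
  by field; exact: lt0r_neq0.
rewrite lnK; last by rewrite posrE divr_gt0 ?Smarg_gt0 ?muV_gt0.
by rewrite mulrC divfK // lt0r_neq0 ?muV_gt0.
Qed.

Lemma affinity_gt0 l b : 0 < affinity l b.
Proof.
rewrite /affinity (bigD1 x0) //= ltr_pwDl //.
  by rewrite mulr_gt0 ?muV_gt0 ?expR_gt0.
by apply: sumr_ge0 => x _; rewrite mulr_ge0 ?expR_ge0 // ltW ?muV_gt0.
Qed.

Lemma vertex_partition_update l b i :
  \sum_x expR (vpot (update l b) i x) =
  (\sum_x expR (vpot l i x)) * (if vert b == i then affinity l b else 1).
Proof.
under eq_bigr do rewrite vpot_update.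
case: eqP => [<-|_]; last by under eq_bigr do rewrite addr0; rewrite mulr1.
exact: partition_tilt.
Qed.

(* The same holds for the block's edge: tilting the edge marginal by
   [1 / ratio_root] gives back [sum mu * ratio_root] since [S = mu ratio_root^2]. *)
Lemma edge_partition_update l b e :
  \sum_xe expR (epot (update l b) e xe) =
  (\sum_xe expR (epot l e xe)) * (if b.1 == e then affinity l b else 1).
Proof.
under eq_bigr do rewrite epot_update.
case: eqP => [<-|_]; last by under eq_bigr do rewrite addr0; rewrite mulr1.
rewrite partition_tilt; congr (_ * _).
rewrite (partition_big (Defs.proj b.2) xpredT) //=; apply: eq_bigr => x _.
transitivity (S l b x / ratio_root l b x).
  by rewrite /Smarg mulr_suml; apply: eq_bigr => xe /eqP <-; rewrite expRN.
by rewrite -ratio_root_sq expr2 mulrA mulfK // lt0r_neq0 // expR_gt0.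
Qed.

Lemma Ldual_update l b :
  L (update l b) = L l + 2 * eta^-1 * ln (affinity l b).
Proof.
have factor_gt0 (c : bool) : 0 < (if c then affinity l b else 1).
  by case: c; rewrite ?affinity_gt0.
rewrite /Ldual.
under eq_bigr do rewrite vertex_partition_update lnM ?posrE ?factor_gt0 ?(partition_gt0 _ x0) //.
under [in X in _ + _ * X]eq_bigr do
  rewrite edge_partition_update lnM ?posrE ?factor_gt0 ?(partition_gt0 _ (x0, x0)) //.
rewrite !big_split /= !sum_ln_at; ring.
Qed.

Lemma block_descent l b :
  (\sum_x `|slack endp CV CE eta l b x|) ^+ 2 <= 4 * eta * (L l - L (update l b)).
Proof.
rewrite Ldual_update.
have -> : 4 * eta * (L l - (L l + 2 * eta^-1 * ln (affinity l b))) =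
          - 8 * ln (affinity l b).
  by field; exact: lt0r_neq0.
have slackE x : slack endp CV CE eta l b x =
    mu l (vert b) x * ratio_root l b x ^+ 2 - mu l (vert b) x.
  by rewrite /slack ratio_root_sq.
under eq_bigr do rewrite slackE.
apply: l1_sq_le_neg_log_affinity => [x|x|||].
- exact/ltW/muV_gt0.
- exact: expR_ge0.
- exact: softmax_sum x0.
- by under eq_bigr do rewrite ratio_root_sq; exact: Smarg_sum.
- exact: affinity_gt0.
Qed.

Lemma slack_obj_descent l :
  slack_obj endp CV CE eta l <=
  4 * eta * (#|{: block}|%:R * L l - \sum_b L (update l b)).
Proof.
rewrite /slack_obj -sum_cst -sumrB mulr_sumr.
by apply: ler_sum => b _; exact: block_descent.
Qed.

Definition Ljensen (l : dual R E X) : R :=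
  eta^-1 * \sum_i (ln #|X|%:R + #|X|%:R^-1 * \sum_x vpot l i x)
  + eta^-1 * \sum_e (ln #|{: X * X}|%:R + #|{: X * X}|%:R^-1 * \sum_xe epot l e xe).

Lemma Ljensen_le l : Ljensen l <= L l.
Proof.
have eta_inv_ge0 : 0 <= eta^-1 by rewrite invr_ge0 ltW.
rewrite /Ljensen /Ldual; apply: lerD; rewrite ler_wpM2l //; apply: ler_sum => ? _.
  exact: logsumexp_ge_mean x0.
exact: logsumexp_ge_mean (x0, x0).
Qed.

(* The total vertex potential sees the duals only through their total mass ... *)
Lemma sum_vpot l :
  \sum_i \sum_x vpot l i x =
  \sum_i \sum_x vpot (@dual0 R E X) i x + eta * \sum_b \sum_x l b x.
Proof.
rewrite /vexp.
under [in RHS]eq_bigr do under eq_bigr do rewrite big1 // mulr0 addr0.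
rewrite (partition_big vert xpredT) //= mulr_sumr -big_split /=.
apply: eq_bigr => i _; rewrite big_split /=; congr (_ + _).
by rewrite -mulr_sumr exchange_big.
Qed.

(* ... and so does the total edge potential, with the opposite sign and a
   multiplicity [#|X|] coming from the other endpoint's label. *)
Lemma sum_epot l :
  \sum_e \sum_xe epot l e xe =
  \sum_e \sum_xe epot (@dual0 R E X) e xe - eta * (#|X|%:R * \sum_b \sum_x l b x).
Proof.
rewrite /eexp.
under [in RHS]eq_bigr do under eq_bigr do rewrite big1 // mulr0 subr0.
have mass : eta * (#|X|%:R * \sum_b \sum_x l b x) =
    \sum_e \sum_xe eta * \sum_c l (e, c) (Defs.proj c xe).
  have -> : \sum_b \sum_x l b x = \sum_e \sum_c \sum_x l (e, c) x.
    by rewrite [RHS]pair_bigA; apply: eq_bigr => -[e c].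
  rewrite mulr_sumr mulr_sumr; apply: eq_bigr => e _.
  rewrite -[RHS]mulr_sumr [in RHS]exchange_big mulr_sumr; congr (eta * _).
  by apply: eq_bigr => c _; rewrite sum_proj_pair.
by rewrite mass -sumrB; apply: eq_bigr => e _; rewrite -sumrB.
Qed.

Lemma Ljensen_invariant l : Ljensen l = Ljensen (@dual0 R E X).
Proof.
have X_neq0 : (#|X|%:R : R) != 0.
  by rewrite pnatr_eq0 -lt0n; apply/card_gt0P; exists x0.
rewrite /Ljensen !big_split /= -!mulr_sumr (sum_vpot l) (sum_epot l) card_prod natrM.
by field; rewrite X_neq0 lt0r_neq0.
Qed.

Lemma inf_Ldual_le l : inf (range L) <= L l.
Proof.
apply: ge_inf; last by exists l.
exists (Ljensen (@dual0 R E X)) => _ [l' _ <-].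
by rewrite -(Ljensen_invariant l') Ljensen_le.
Qed.

End EMPStep.

Theorem lemma8 (R : realType) (V E X : finType) (endp : E -> bool -> V)
  (CV : V -> X -> R) (CE : E -> X * X -> R) (eta : R) (K : nat)
  (Hloop : forall e, endp e false != endp e true)
  (Hsimple : forall e f, [set endp e false; endp e true]%SET = [set endp f false; endp f true]%SET :> {set V} -> e = f)
  (Hinc : forall i : V, exists e b, endp e b = i)
  (HX : (2 <= #|X|)%N)
  (Heta : 0 < eta) (HK : (1 <= K)%N)
  (sel : K.-tuple (E * bool) -> 'I_K.+1)
  (Hsel : forall (bs : K.-tuple (E * bool)) (k : 'I_K.+1),
      slack_obj endp CV CE eta (iterate endp CV CE eta bs (sel bs))
      <= slack_obj endp CV CE eta (iterate endp CV CE eta bs k)) :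
  (#|{: E * bool}| ^ K)%:R^-1 *
    \sum_(bs : K.-tuple (E * bool))
       slack_obj endp CV CE eta (iterate endp CV CE eta bs (sel bs))
  <= 8 * #|E|%:R * eta *
       (Ldual endp CV CE eta (@dual0 R E X)
        - inf (range (Ldual endp CV CE eta))) / K%:R.
Proof.
have /card_gt0P [x0 _] : (0 < #|X|)%N by apply: leq_trans HX.
set N : R := #|{: E * bool}|%:R.
set L0 := Ldual endp CV CE eta (@dual0 R E X).
set Linf := inf (range (Ldual endp CV CE eta)).
set total := \sum_(bs : K.-tuple _) _.
have argmin_le : K%:R * total <= \sum_(bs : K.-tuple (E * bool)) \sum_(k < K)
    slack_obj endp CV CE eta (iterate endp CV CE eta bs k).
  rewrite /total mulr_sumr; apply: ler_sum => bs _.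
  rewrite -[K in K%:R](card_ord K) -sum_cst; apply: ler_sum => k _.
  exact: (Hsel bs (widen_ord (leqnSn K) k)).
have descent := expected_descent (slack_obj_descent endp CV CE Heta x0) K (@dual0 R E X).
have final_ge : N ^+ K * Linf <= \sum_(bs : K.-tuple (E * bool))
    Ldual endp CV CE eta (foldl (emp_update endp CV CE eta) (@dual0 R E X) bs).
  rewrite -natrX -card_tuple -sum_cst; apply: ler_sum => bs _.
  exact: inf_Ldual_le Heta x0 _.
have N_eq : N = 2 * #|E|%:R by rewrite /N card_prod card_bool natrM mulrC.
have [E_empty|E_nonempty] := eqVneq #|E| 0%N.
  by rewrite card_prod E_empty mul0n exp0n // invr0 mul0r mulr0 !mul0r.
have NK_gt0 : 0 < N ^+ K by rewrite exprn_gt0 // N_eq mulr_gt0 // ltr0n lt0n.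
have K_gt0 : 0 < (K%:R : R) by rewrite ltr0n.
rewrite natrX -/N -(ler_pM2r (mulr_gt0 K_gt0 NK_gt0)).
have -> : (N ^+ K)^-1 * total * (K%:R * N ^+ K) = K%:R * total.
  by field; exact: lt0r_neq0.
have -> : 8 * #|E|%:R * eta * (L0 - Linf) / K%:R * (K%:R * N ^+ K) =
    4 * eta * N * (N ^+ K * L0 - N ^+ K * Linf).
  by rewrite N_eq; field; exact: lt0r_neq0.
apply: (le_trans argmin_le); apply: (le_trans descent).
by rewrite ler_wpM2l ?mulr_ge0 ?ler0n ?(ltW Heta) // lerB.
Qed.
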